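(* In the contention game with $k=3$ channels under acknowledgement-based feedback and $n\in\{2,3,4,5\}$ players, the anonymous protocol $f^3$ (in every slot, regardless of history, a pending player transmits on each of the three channels with probability $1/3$ and never stays idle) is an equilibrium protocol, with expected latency of each player equal to $3/2$, $15/8$, $189/80$ and $597/200$ for $n=2,3,4,5$ respectively.
   Context: Contention game: $n$ players, channel set $K=\{1,\dots,k\}$, discrete slots $t=1,2,\dots$; each player has one packet and is initially pending. In each slot a pending player chooses (possibly at random) an action in $\{0,1,\dots,k\}$ ($0$ = no transmission, $a$ = transmit on channel $a$). A lone transmitter on a channel succeeds and leaves; two or more transmitters on a channel collide and remain pending. Latency $T_i$ = slot of player $i$'s successful transmission; players minimize expected latency. Acknowledgement-based feedback: only a player who attempted transmission learns whether she succeeded; decision rules depend only on the personal action history. A protocol is a sequence of such decision rules; an anonymous protocol is used by all players and does not depend on identity. It is an equilibrium protocol if, when all players use it, no player at any slot and after any history can decrease her conditional expected latency by unilaterally deviating. *)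

From HB Require Import structures.
From mathcomp Require Import all_boot all_order all_algebra.
From mathcomp Require Import all_classical all_reals.
From mathcomp Require Import ereal topology normedtype sequences.
Set Implicit Arguments. Unset Strict Implicit. Unset Printing Implicit Defensive.
Import Order.TTheory GRing.Theory Num.Theory.
Local Open Scope ring_scope.

(** Contention game with k = 3 channels, n players (indexed by 'I_n),
    acknowledgement-based feedback.
    Actions: 'I_4, where 0 = stay idle and a = 1,2,3 = transmit on channel a. *)

Section Game.
Variable R : realType.

Definition action := 'I_4.

(** A (randomized) decision rule sequence, i.e. a protocol/strategy for one
    player: it maps the player's personal action history (the sequence of her
    own past actions; under acknowledgement-based feedback, as long as she is
    pending, every past transmission failed and an idle slot gives no
    information, so the personal history is exactly this sequence) to a
    probability distribution over actions. *)
Definition strategy := seq action -> action -> R.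

Definition valid_strategy (sigma : strategy) : Prop :=
  (forall h a, 0 <= sigma h a) /\ (forall h, \sum_(a : action) sigma h a = 1).

Definition f3dist (a : action) : R := if a == ord0 then 0 else 3%:R^-1.

Definition f3 : strategy := fun _ a => f3dist a.

Variable n : nat.

(** Players succeeding under an action profile [x] (non-pending players are
    given action 0): a lone transmitter on a channel succeeds. *)
Definition succ (x : {ffun 'I_n -> action}) : {set 'I_n} :=
  [set j | (x j != ord0) && [forall j', (j' != j) ==> (x j' != x j)]].

Variable i : 'I_n. (* the player under consideration (possible deviator) *)

Definition prof_w (S : {set 'I_n}) (a : action) (x : {ffun 'I_n -> action}) : R :=
  \prod_(j : 'I_n)
     (if j == i then (x j == a)%:R
      else if j \in S then f3dist (x j) else (x j == ord0)%:R).

(** One slot: from a (sub-probability) weight on pending sets to the weight on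
    the next pending sets, restricted to outcomes where player [i] is still
    pending. *)
Definition step (d : {set 'I_n} -> R) (a : action) : {set 'I_n} -> R :=
  fun S' => \sum_(S : {set 'I_n}) d S *
     \sum_(x : {ffun 'I_n -> action})
        prof_w S a x * ((S :\: succ x == S') && (i \in S'))%:R.

Definition init_state : {set 'I_n} -> R := fun S => (S == [set: 'I_n]%SET)%:R.

(** [reach h S] = probability that, when player i's own actions are the
    sequence [h] and all other players use f^3, player i is still pending
    after [size h] slots and the set of pending players is [S]. *)
Definition reach (h : seq action) : {set 'I_n} -> R := foldl step init_state h.

(** Probability (likelihood, up to the factor due to i's own randomization)
    of the personal history [h]. *)
Definition mass (h : seq action) : R := \sum_(S : {set 'I_n}) reach h S.

Fixpoint stratprob (sigma : strategy) (h : seq action) (s : seq action) : R :=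
  match s with
  | [::] => 1
  | a :: s' => sigma h a * stratprob sigma (rcons h a) s'
  end.

(** Conditional probability, given personal history [h] (player i pending at
    slot size h + 1), that player i is still pending after [u] further slots
    when she continues with [sigma] and the others use f^3. *)
Definition surv (sigma : strategy) (h : seq action) (u : nat) : R :=
  (\sum_(s : u.-tuple action) stratprob sigma h s * mass (h ++ s)) / mass h.

(** Conditional expected latency E[T_i | h] = size h + sum_{u>=0} P(T_i > size h + u | h),
    an extended real (may be +oo). *)
Definition exp_latency (sigma : strategy) (h : seq action) : \bar R :=
  ((size h)%:R)%:E + (\sum_(0 <= u <oo) (surv sigma h u)%:E)%E.

End Game.

Definition f3_equilibrium (R : realType) (n : nat) : Prop :=
  forall (i : 'I_n) (h : seq action) (sigma : strategy R),
    valid_strategy sigma -> 0 < @mass R n i h ->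
    (@exp_latency R n i (f3 R) h <= @exp_latency R n i sigma h)%E.

Definition lat_value (R : realType) (n : nat) : R :=
  match n with
  | 2 => 3%:R / 2%:R
  | 3 => 15%:R / 8%:R
  | 4 => 189%:R / 80%:R
  | _ => 597%:R / 200%:R
  end.

From HB Require Import structures.
From mathcomp Require Import all_boot all_order all_algebra.
From mathcomp Require Import all_classical all_reals.
From mathcomp Require Import ereal topology normedtype sequences.
From mathcomp Require Import ring lra.
Import Order.TTheory GRing.Theory Num.Theory.
Set Implicit Arguments. Unset Strict Implicit. Unset Printing Implicit Defensive.

(* Let v_k be the expected latency of each pending player when k players are
   pending and all of them use f^3, and let V S = v_|S|.  For 2 <= n <= 5,
   exhaustive enumeration of the action profiles shows that V satisfies the
   Bellman inequality V S <= 1 + E[V S'; i still pending] for every action of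
   player i, with equality for the three transmitting actions.  Iterating it
   along an arbitrary continuation sigma after a history h, E[V | h] is at most
   the sum of the first N survival probabilities plus (max V) times the N-th
   one, while for f^3 it is that partial sum plus a nonnegative remainder.
   Hence the expected latency after h is at least |h| + E[V | h] for every
   sigma, with equality for f^3; at the start it is V of the full set, v_n. *)

Section Series.
Local Open Scope ring_scope.

Lemma nneseries_le_bound (R : realType) (t : nat -> R) c :
  (forall u, 0 <= t u) -> (forall N, \sum_(0 <= u < N) t u <= c) ->
  (\sum_(0 <= u <oo) (t u)%:E <= c%:E)%E.
Proof.
move=> t_ge0 partial_le.
have t_ge0E k : (0 <= k)%N -> xpredT k -> (0 <= (t k)%:E)%E by rewrite lee_fin.
apply: lime_le (is_cvg_nneseries t_ge0E) _; apply: nearW => N.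
by rewrite sumEFin lee_fin.
Qed.

(* If the sum were a real l < c, every term would exceed (c - l) / (K + 1) > 0,
   and the partial sums would be unbounded. *)
Lemma nneseries_ge_tail (R : realType) (t : nat -> R) c K : 0 <= K ->
  (forall u, 0 <= t u) -> (forall N, c <= \sum_(0 <= u < N) t u + K * t N) ->
  (c%:E <= \sum_(0 <= u <oo) (t u)%:E)%E.
Proof.
move=> K_ge0 t_ge0 tail.
have t_ge0E k : (0 <= k)%N -> xpredT k -> (0 <= (t k)%:E)%E by rewrite lee_fin.
have partial_le N : ((\sum_(0 <= u < N) t u)%:E <= \sum_(0 <= u <oo) (t u)%:E)%E.
  by rewrite -sumEFin; apply: nneseries_lim_ge.
move: (\sum_(0 <= u <oo) (t u)%:E)%E partial_le (nneseries_ge0 t_ge0E).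
case=> [l| |] partial_le // _; last by rewrite leey.
rewrite lee_fin leNgt; apply/negP => lc.
have {}partial_le N : \sum_(0 <= u < N) t u <= l by rewrite -lee_fin.
have K1_gt0 : 0 < K + 1 by lra.
set d := (c - l) / (K + 1).
have d_gt0 : 0 < d by rewrite divr_gt0 // subr_gt0.
have t_ge N : d <= t N.
  rewrite ler_pdivrMr //; have := tail N; have := partial_le N; have := t_ge0 N; nra.
have partial_ge N : N%:R * d <= \sum_(0 <= u < N) t u.
  elim: N => [|N IH]; first by rewrite big_geq // mul0r.
  by rewrite big_nat_recr //= -natr1 mulrDl mul1r lerD.
have := partial_ge (Num.truncn (l / d)).+1; have := partial_le (Num.truncn (l / d)).+1.
have := truncnS_gt (l / d); rewrite ltr_pdivrMr //; lra.
Qed.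

End Series.

Local Open Scope nat_scope.

(* Action profiles and pending sets are enumerated as lists of numbers and
   booleans, on which the Bellman inequality can be decided by [vm_compute]. *)
Fixpoint nat_lists (n k : nat) : seq (seq nat) :=
  if n is n'.+1 then [seq c :: l | c <- iota 0 k, l <- nat_lists n' k] else [:: [::]].

Fixpoint bool_lists (n : nat) : seq (seq bool) :=
  if n is n'.+1 then [seq b :: l | b <- [:: true; false], l <- bool_lists n']
  else [:: [::]].

Lemma mem_nat_lists n k l :
  (l \in nat_lists n k) = (size l == n) && all (fun c => c < k) l.
Proof.
elim: n l => [|n IH] [|c l] //=.
- by apply/negbTE/allpairsP => -[[x y] /= [_ _]].
- apply/allpairsP/andP => [[[x y] /= [hx hy [-> ->]]]|[hs /andP[hc ha]]].
    by move: hy hx; rewrite IH mem_iota => /andP[/eqP -> ->] /andP[_ ->].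
  by exists (c, l); rewrite /= mem_iota IH ha andbT.
Qed.

Lemma uniq_nat_lists n k : uniq (nat_lists n k).
Proof.
elim: n => [|n IH] //=; apply: allpairs_uniq => //; first exact: iota_uniq.
by move=> [x1 y1] [x2 y2] _ _ /= [-> ->].
Qed.

Lemma mem_bool_lists n bl : size bl = n -> bl \in bool_lists n.
Proof.
elim: n bl => [|n IH] [|b bl] // [hs].
by apply/allpairsP; exists (b, bl); rewrite /= IH //; case: b.
Qed.

Lemma forall_ord_iota n (P : pred nat) : [forall j : 'I_n, P j] = all P (iota 0 n).
Proof.
apply/forallP/allP => [H k | H j]; last by apply: H; rewrite mem_iota /= ltn_ord.
by rewrite mem_iota => /andP[_ hk]; exact: (H (Ordinal hk)).
Qed.

Lemma card_count_iota n (A : {set 'I_n}) (P : pred nat) :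
  (forall j : 'I_n, (j \in A) = P j) -> #|A| = count P (iota 0 n).
Proof.
move=> AP; rewrite -val_enum_ord count_map cardE /enum_mem size_filter filter_predT.
by apply: eq_count => j; rewrite /= AP.
Qed.

Lemma big_tupleS (R : Type) (idx : R) (op : Monoid.com_law idx) (T : finType) u
    (F : seq T -> R) :
  \big[op/idx]_(s : u.+1.-tuple T) F s =
  \big[op/idx]_(a : T) \big[op/idx]_(s : u.-tuple T) F (a :: s).
Proof.
rewrite pair_big (reindex (fun p : T * u.-tuple T => [tuple of p.1 :: p.2])) //=.
exists (fun t => (thead t, [tuple of behead t])) => [[a s] _ | t _] /=.
  by rewrite theadE; congr (_, _); apply: val_inj.
by rewrite -tuple_eta.
Qed.

Section Encoding.
Variable n : nat.

Definition profile_of_seq (l : seq nat) : {ffun 'I_n -> 'I_4} :=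
  [ffun j : 'I_n => inord (nth 0 l j)].
Definition seq_of_profile (x : {ffun 'I_n -> 'I_4}) : seq nat :=
  [seq val (x j) | j <- enum 'I_n].
Definition seq_of_set (S : {set 'I_n}) : seq bool := [seq j \in S | j <- enum 'I_n].

Lemma profile_of_seqE l (j : 'I_n) :
  l \in nat_lists n 4 -> val (profile_of_seq l j) = nth 0 l j.
Proof.
rewrite ffunE /= mem_nat_lists => /andP[_ /allP l4]; apply: inordK.
by case: (ltnP j (size l)) => hj; [apply: l4; apply: mem_nth | rewrite nth_default].
Qed.

Lemma seq_of_profileK : cancel seq_of_profile profile_of_seq.
Proof.
move=> x; apply/ffunP => j; rewrite ffunE /seq_of_profile (nth_map j) ?size_enum_ord //.
by rewrite nth_ord_enum inord_val.
Qed.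

Lemma seq_of_profile_in x : seq_of_profile x \in nat_lists n 4.
Proof.
rewrite mem_nat_lists size_map size_enum_ord eqxx /=.
by apply/allP => c /mapP [j _ ->]; exact: ltn_ord.
Qed.

Lemma profile_of_seq_inj : {in nat_lists n 4 &, injective profile_of_seq}.
Proof.
move=> l1 l2 l1in l2in eq12.
have [/eqP sz1 _] := andP (etrans (esym (mem_nat_lists _ _ _)) l1in).
have [/eqP sz2 _] := andP (etrans (esym (mem_nat_lists _ _ _)) l2in).
apply: (@eq_from_nth _ 0) => [|j]; first by rewrite sz1 sz2.
rewrite sz1 => jn.
by rewrite -(profile_of_seqE (Ordinal jn) l1in) -(profile_of_seqE (Ordinal jn) l2in) eq12.
Qed.

Lemma big_profile (R : Type) (idx : R) (op : Monoid.com_law idx)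
    (F : {ffun 'I_n -> 'I_4} -> R) :
  \big[op/idx]_x F x = \big[op/idx]_(l <- nat_lists n 4) F (profile_of_seq l).
Proof.
rewrite -(big_map profile_of_seq xpredT F) [RHS]big_uniq.
  apply: eq_bigl => x; apply/esym/mapP; exists (seq_of_profile x).
    exact: seq_of_profile_in.
  by rewrite seq_of_profileK.
by rewrite map_inj_in_uniq ?uniq_nat_lists //; exact: profile_of_seq_inj.
Qed.

Lemma nth_seq_of_set S (j : 'I_n) : nth false (seq_of_set S) j = (j \in S).
Proof. by rewrite (nth_map j) ?size_enum_ord // nth_ord_enum. Qed.

Lemma size_seq_of_set S : size (seq_of_set S) = n.
Proof. by rewrite size_map size_enum_ord. Qed.

Lemma count_seq_of_set S : count id (seq_of_set S) = #|S|.
Proof. by rewrite count_map cardE /enum_mem size_filter filter_predT. Qed.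

End Encoding.

(* 400 v_k, with v_1, ..., v_5 = 1, 3/2, 15/8, 189/80, 597/200. *)
Definition scaled_latency (k : nat) : nat :=
  match k with 1 => 400 | 2 => 600 | 3 => 750 | 4 => 945 | 5 => 1194 | _ => 0 end.

Definition lone_seq n (l : seq nat) (j : nat) : bool :=
  (nth 0 l j != 0) && all (fun j' => (j' == j) || (nth 0 l j' != nth 0 l j)) (iota 0 n).

Definition stays_seq n (bl : seq bool) (l : seq nat) (j : nat) : bool :=
  nth false bl j && ~~ lone_seq n l j.

Definition consistent_seq n i (bl : seq bool) a (l : seq nat) : bool :=
  all (fun j => if j == i then nth 0 l j == a
                else if nth false bl j then nth 0 l j != 0 else nth 0 l j == 0)
      (iota 0 n).

Definition next_latency_seq n i bl a : nat :=
  sumn [seq scaled_latency (count (stays_seq n bl l) (iota 0 n))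
       | l <- nat_lists n 4 & consistent_seq n i bl a l && stays_seq n bl l i].

(* The Bellman inequality for S |-> v_|S| (an equality when player i transmits),
   multiplied by 400 * 3 ^ (|S| - 1): the 3 ^ (|S| - 1) choices of the other
   pending players are equally likely. *)
Definition bellman_check n : bool :=
  all (fun i => all (fun bl => nth false bl i ==>
    all (fun a => let m := (count id bl).-1 in
         let lhs := scaled_latency (count id bl) * 3 ^ m in
         let rhs := 400 * 3 ^ m + next_latency_seq n i bl a in
         (lhs <= rhs) && ((a != 0) ==> (lhs == rhs))) (iota 0 4))
    (bool_lists n)) (iota 0 n).

Lemma bellman_check_small n : 2 <= n <= 5 -> bellman_check n.
Proof.
have checked : all bellman_check [:: 2; 3; 4; 5] by vm_cast_no_check (erefl true).
move=> /andP[n2 n5]; apply: (allP checked n).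
by case: n n2 n5 => [|[|[|[|[|[|n]]]]]].
Qed.

Definition consistent n (i : 'I_n) (S : {set 'I_n}) (a : 'I_4)
    (x : {ffun 'I_n -> 'I_4}) : bool :=
  [forall j, if j == i then x j == a else if j \in S then x j != ord0 else x j == ord0].

Definition next_latency n (i : 'I_n) (S : {set 'I_n}) (a : 'I_4) : nat :=
  \sum_(x | consistent i S a x && (i \in S :\: succ x)) scaled_latency #|S :\: succ x|.

Section Transfer.
Variables (n : nat) (l : seq nat).
Hypothesis l4 : l \in nat_lists n 4.

Lemma lone_seqE (j : 'I_n) : (j \in succ (profile_of_seq n l)) = lone_seq n l j.
Proof.
rewrite inE -val_eqE profile_of_seqE //= /lone_seq -forall_ord_iota; congr (_ && _).
by apply: eq_forallb => j'; rewrite -!val_eqE !profile_of_seqE //= implybE negbK.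
Qed.

Lemma stays_seqE S (j : 'I_n) :
  (j \in S :\: succ (profile_of_seq n l)) = stays_seq n (seq_of_set S) l j.
Proof. by rewrite inE andbC lone_seqE /stays_seq nth_seq_of_set. Qed.

Lemma consistent_seqE i S a :
  consistent i S a (profile_of_seq n l) = consistent_seq n i (seq_of_set S) a l.
Proof.
rewrite /consistent /consistent_seq -forall_ord_iota; apply: eq_forallb => j.
by rewrite -!val_eqE !profile_of_seqE //= nth_seq_of_set.
Qed.

End Transfer.

Lemma next_latency_seqE n (i : 'I_n) S (a : 'I_4) :
  next_latency_seq n i (seq_of_set S) a = next_latency i S a.
Proof.
rewrite /next_latency big_mkcond big_profile /next_latency_seq sumnE big_map big_filter.
rewrite [LHS]big_mkcond; apply: eq_big_seq => l l4.
rewrite consistent_seqE // stays_seqE //; case: ifP => // _.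
by congr scaled_latency; apply/esym/card_count_iota => j; rewrite stays_seqE.
Qed.

Lemma bellman_check_sound n (i : 'I_n) (S : {set 'I_n}) (a : 'I_4) :
  bellman_check n -> i \in S ->
  (scaled_latency #|S| * 3 ^ #|S|.-1 <= 400 * 3 ^ #|S|.-1 + next_latency i S a) /\
  (a != ord0 ->
   scaled_latency #|S| * 3 ^ #|S|.-1 = 400 * 3 ^ #|S|.-1 + next_latency i S a).
Proof.
move=> /allP /(_ i) check iS; move: check; rewrite mem_iota ltn_ord => /(_ isT) /allP.
move=> /(_ _ (mem_bool_lists (size_seq_of_set S))); rewrite nth_seq_of_set iS implyTb.
move=> /allP /(_ a); rewrite mem_iota ltn_ord => /(_ isT).
rewrite count_seq_of_set next_latency_seqE => /andP[-> /implyP eq_a]; split=> // a0.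
exact/eqP/eq_a.
Qed.

Local Open Scope ring_scope.

Lemma prod_nat_bool n (b : 'I_n -> bool) :
  (\prod_(j : 'I_n) (b j : nat))%N = [forall j, b j].
Proof.
case: (boolP [forall j, b j]) => [/forallP bT|/forallPn [j bj]].
  by rewrite big1 // => j _; rewrite bT.
by rewrite (bigD1 j) //= (negbTE bj).
Qed.

Section Reach.
Variables (R : realType) (n : nat) (i : 'I_n).

Lemma prof_wE S a x :
  prof_w R i S a x = (consistent i S a x)%:R * (3%:R^-1) ^+ #|S :\ i|.
Proof.
rewrite /prof_w (eq_bigr (fun j => (if j == i then x j == a else if j \in S then x j != ord0
    else x j == ord0)%:R * (if j \in S :\ i then 3%:R^-1 else 1))); last first.
  move=> j _; rewrite !inE; case: (j == i); first by rewrite mulr1.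
  case: (j \in S); last by rewrite mulr1.
  by rewrite /f3dist; case: (x j == ord0); rewrite ?mul0r ?mul1r.
by rewrite big_split /= -big_mkcond prodr_const -natr_prod prod_nat_bool.
Qed.

Lemma prof_w_ge0 S a x : 0 <= prof_w R i S a x.
Proof. by rewrite prof_wE mulr_ge0 // exprn_ge0 // invr_ge0. Qed.

Definition weight (d : {set 'I_n} -> R) : R := \sum_S d S.

Lemma step_ge0 (d : {set 'I_n} -> R) a :
  (forall S, 0 <= d S) -> forall S, 0 <= step i d a S.
Proof.
move=> d_ge0 S; apply: sumr_ge0 => T _; rewrite mulr_ge0 //.
by apply: sumr_ge0 => x _; rewrite mulr_ge0 // prof_w_ge0.
Qed.

Lemma step_pending (d : {set 'I_n} -> R) a S : step i d a S != 0 -> i \in S.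
Proof.
apply: contraR => iS; apply/eqP/big1 => T _.
by rewrite big1 ?mulr0 // => x _; rewrite (negbTE iS) andbF mulr0.
Qed.

Lemma reach_rcons h a : reach R i (rcons h a) = step i (reach R i h) a.
Proof. by rewrite /reach foldl_rcons. Qed.

Lemma reach_ge0 h S : 0 <= reach R i h S.
Proof.
elim/last_ind: h S => [|h a IH] S; first by rewrite /reach /= /init_state ler0n.
by rewrite reach_rcons step_ge0.
Qed.

Lemma reach_pending h S : reach R i h S != 0 -> i \in S.
Proof.
elim/last_ind: h S => [|h a _] S; last by rewrite reach_rcons; exact: step_pending.
rewrite /reach /= /init_state.
by have [->|] := eqVneq S [set: 'I_n]%SET; rewrite ?inE ?eqxx.
Qed.

Definition reach_after (sigma : strategy R) h u S : R :=
  \sum_(s : u.-tuple action) stratprob sigma h s * reach R i (h ++ s) S.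

Lemma reach_after0 sigma h : reach_after sigma h 0 = reach R i h.
Proof.
apply/funext => S; rewrite /reach_after (big_pred1 [tuple]) /= ?mul1r ?cats0 //.
by move=> t; apply/esym/eqP/val_inj; case: t => -[].
Qed.

Lemma reach_afterS sigma h u S :
  reach_after sigma h u.+1 S = \sum_a sigma h a * reach_after sigma (rcons h a) u S.
Proof.
rewrite /reach_after (big_tupleS _ _ (fun s => stratprob sigma h s * reach R i (h ++ s) S)).
apply: eq_bigr => a _; rewrite mulr_sumr.
by apply: eq_bigr => s _; rewrite /= cat_rcons mulrA.
Qed.

Lemma weight_reach_afterS sigma h u :
  weight (reach_after sigma h u.+1) =
  \sum_a sigma h a * weight (reach_after sigma (rcons h a) u).
Proof.
rewrite /weight; under eq_bigr do rewrite reach_afterS.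
by rewrite exchange_big; apply: eq_bigr => a _; rewrite mulr_sumr.
Qed.

Lemma survE sigma h u : surv i sigma h u = weight (reach_after sigma h u) / mass R i h.
Proof.
rewrite /surv /weight /reach_after /mass; congr (_ / _).
by rewrite exchange_big; apply: eq_bigr => s _; rewrite mulr_sumr.
Qed.

Lemma stratprob_ge0 (sigma : strategy R) h s :
  valid_strategy sigma -> 0 <= stratprob sigma h s.
Proof.
move=> [sigma_ge0 _]; elim: s h => [|a s IH] h /=; first exact: ler01.
by rewrite mulr_ge0.
Qed.

Lemma reach_after_ge0 sigma h u S : valid_strategy sigma -> 0 <= reach_after sigma h u S.
Proof.
by move=> sigmaP; apply: sumr_ge0 => s _; rewrite mulr_ge0 ?stratprob_ge0 ?reach_ge0.
Qed.

Lemma surv_ge0 (sigma : strategy R) h u :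
  valid_strategy sigma -> 0 < mass R i h -> 0 <= surv i sigma h u.
Proof.
move=> sigmaP mass_gt0; rewrite survE divr_ge0 ?(ltW mass_gt0) //.
by apply: sumr_ge0 => S _; exact: reach_after_ge0.
Qed.

End Reach.

Lemma f3_valid (R : realType) : valid_strategy (f3 R).
Proof.
split=> [h a|h]; first by rewrite /f3 /f3dist; case: ifP; rewrite ?invr_ge0.
rewrite (bigD1 ord0) //= add0r (eq_bigr (fun _ => 3%:R^-1)).
  by rewrite sumr_const cardC1 card_ord /= -[_ *+ 3]mulr_natr mulVf ?pnatr_eq0.
by move=> a /negbTE a0; rewrite /f3 /f3dist a0.
Qed.

Section Verification.
Variables (R : realType) (n : nat) (i : 'I_n) (V : {set 'I_n} -> R) (Vmax : R).

Definition next_value S a : R :=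
  \sum_x prof_w R i S a x * ((i \in S :\: succ x)%:R * V (S :\: succ x)).

Definition potential (d : {set 'I_n} -> R) : R := \sum_S d S * V S.

Hypothesis V_ge0 : forall S, 0 <= V S.
Hypothesis V_le : forall S, V S <= Vmax.
Hypothesis V_bellman :
  forall (S : {set 'I_n}) (a : action), i \in S -> V S <= 1 + next_value S a.
Hypothesis V_bellman_f3 :
  forall (S : {set 'I_n}) (a : action), i \in S -> a != ord0 -> V S = 1 + next_value S a.

Lemma potential_step (d : {set 'I_n} -> R) a :
  potential (step i d a) = \sum_S d S * next_value S a.
Proof.
have pick (T : {set 'I_n}) :
    \sum_(S' : {set 'I_n}) ((T == S') && (i \in S'))%:R * V S' = (i \in T)%:R * V T.
  rewrite (bigD1 T) //= eqxx big1 ?addr0 // => S' S'T.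
  by rewrite eq_sym (negbTE S'T) mul0r.
rewrite /potential /step; under eq_bigr do rewrite big_distrl.
rewrite exchange_big; apply: eq_bigr => S _ /=.
under eq_bigr do rewrite -mulrA; rewrite -big_distrr /=; congr (_ * _).
under eq_bigr do rewrite big_distrl.
rewrite exchange_big; apply: eq_bigr => x _ /=.
by rewrite -pick mulr_sumr; apply: eq_bigr => S' _; rewrite mulrA.
Qed.

Lemma potential_reach_le h a :
  potential (reach R i h) <= weight (reach R i h) + potential (reach R i (rcons h a)).
Proof.
rewrite reach_rcons potential_step /potential /weight -big_split /=; apply: ler_sum => S _.
have [->|reach_neq0] := eqVneq (reach R i h S) 0; first by rewrite !mul0r addr0.
rewrite -[X in X + _]mulr1 -mulrDr ler_wpM2l ?reach_ge0 //.
exact/V_bellman/(reach_pending reach_neq0).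
Qed.

Lemma potential_reach_f3 h a : a != ord0 ->
  potential (reach R i h) = weight (reach R i h) + potential (reach R i (rcons h a)).
Proof.
move=> a0; rewrite reach_rcons potential_step /potential /weight -big_split /=.
apply: eq_bigr => S _.
have [->|reach_neq0] := eqVneq (reach R i h S) 0; first by rewrite !mul0r addr0.
by rewrite -[X in X + _]mulr1 -mulrDr -V_bellman_f3 // (reach_pending reach_neq0).
Qed.

Lemma potential_reach_avg_le sigma h : valid_strategy sigma ->
  potential (reach R i h) <=
  weight (reach R i h) + \sum_a sigma h a * potential (reach R i (rcons h a)).
Proof.
move=> [sigma_ge0 sigma_sum1].
have avg x : x = \sum_a sigma h a * x by rewrite -mulr_suml sigma_sum1 mul1r.
rewrite [potential _]avg [weight _]avg -big_split /=; apply: ler_sum => a _ /=.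
by rewrite -mulrDr ler_wpM2l // potential_reach_le.
Qed.

Lemma potential_reach_avg_f3 h :
  potential (reach R i h) =
  weight (reach R i h) + \sum_a f3 R h a * potential (reach R i (rcons h a)).
Proof.
have [_ f3_sum1] := f3_valid R.
have avg x : x = \sum_a f3 R h a * x by rewrite -mulr_suml f3_sum1 mul1r.
rewrite [potential _]avg [weight _]avg -big_split /=; apply: eq_bigr => a _ /=.
rewrite -mulrDr; have [->|a0] := eqVneq a ord0; first by rewrite /f3 /f3dist eqxx !mul0r.
by rewrite -potential_reach_f3.
Qed.

Lemma potential_reach_afterS sigma h u :
  potential (reach_after i sigma h u.+1) =
  \sum_a sigma h a * potential (reach_after i sigma (rcons h a) u).
Proof.
rewrite /potential; under eq_bigr do rewrite reach_afterS mulr_suml.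
rewrite exchange_big; apply: eq_bigr => a _; rewrite mulr_sumr.
by apply: eq_bigr => S _; rewrite mulrA.
Qed.

Lemma survival_unfold sigma h N :
  \sum_(0 <= u < N.+1) weight (reach_after i sigma h u) +
  potential (reach_after i sigma h N.+1) =
  weight (reach R i h) + \sum_a sigma h a *
    (\sum_(0 <= u < N) weight (reach_after i sigma (rcons h a) u) +
     potential (reach_after i sigma (rcons h a) N)).
Proof.
rewrite big_nat_recl // reach_after0 -addrA; congr (_ + _).
under eq_bigr => u _ do rewrite weight_reach_afterS.
rewrite exchange_big potential_reach_afterS -big_split /=.
by apply: eq_bigr => a _; rewrite mulrDr -mulr_sumr.
Qed.

Lemma potential_le_survival sigma h N : valid_strategy sigma ->
  potential (reach R i h) <=
  \sum_(0 <= u < N) weight (reach_after i sigma h u) + potential (reach_after i sigma h N).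
Proof.
move=> sigmaP; elim: N h => [|N IH] h; first by rewrite big_geq // add0r reach_after0.
rewrite survival_unfold; apply: le_trans (potential_reach_avg_le h sigmaP) _.
by rewrite lerD2l; apply: ler_sum => a _; rewrite ler_wpM2l ?IH //; exact: sigmaP.1.
Qed.

Lemma potential_eq_survival_f3 h N :
  potential (reach R i h) =
  \sum_(0 <= u < N) weight (reach_after i (f3 R) h u) + potential (reach_after i (f3 R) h N).
Proof.
elim: N h => [|N IH] h; first by rewrite big_geq // add0r reach_after0.
rewrite survival_unfold potential_reach_avg_f3; congr (_ + _).
by apply: eq_bigr => a _; rewrite IH.
Qed.

Lemma potential_ge0 d : (forall S, 0 <= d S) -> 0 <= potential d.
Proof. by move=> d_ge0; apply: sumr_ge0 => S _; rewrite mulr_ge0. Qed.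

Lemma potential_le_weight d : (forall S, 0 <= d S) -> potential d <= Vmax * weight d.
Proof.
move=> d_ge0; rewrite /potential /weight mulr_sumr; apply: ler_sum => S _.
by rewrite mulrC ler_wpM2r.
Qed.

Lemma exp_latency_ge sigma h : valid_strategy sigma -> 0 < mass R i h ->
  (((size h)%:R + potential (reach R i h) / mass R i h)%:E <= exp_latency i sigma h)%E.
Proof.
move=> sigmaP mass_gt0; rewrite /exp_latency EFinD; apply: leeD2l.
have Vmax_ge0 : 0 <= Vmax := le_trans (V_ge0 [set: 'I_n]%SET) (V_le _).
apply: (nneseries_ge_tail Vmax_ge0) => [u|N]; first exact: surv_ge0.
under eq_bigr do rewrite survE.
rewrite survE -mulr_suml mulrA -mulrDl ler_wpM2r ?invr_ge0 ?(ltW mass_gt0) //.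
apply: le_trans (potential_le_survival h N sigmaP) _; rewrite lerD2l.
by apply: potential_le_weight => S; exact: reach_after_ge0.
Qed.

Lemma exp_latency_f3 h : 0 < mass R i h ->
  exp_latency i (f3 R) h = ((size h)%:R + potential (reach R i h) / mass R i h)%:E.
Proof.
move=> mass_gt0; apply/eqP; rewrite eq_le (exp_latency_ge (f3_valid R) mass_gt0) andbT.
rewrite /exp_latency EFinD; apply: leeD2l; apply: nneseries_le_bound => [u|N].
  exact: surv_ge0 (f3_valid R) mass_gt0.
under eq_bigr do rewrite survE.
rewrite -mulr_suml ler_wpM2r ?invr_ge0 ?(ltW mass_gt0) // (potential_eq_survival_f3 h N).
by rewrite lerDl; apply: potential_ge0 => S; exact: reach_after_ge0 (f3_valid R).
Qed.

Lemma f3_best_response sigma h : valid_strategy sigma -> 0 < mass R i h ->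
  (exp_latency i (f3 R) h <= exp_latency i sigma h)%E.
Proof. by move=> sigmaP mass_gt0; rewrite exp_latency_f3 // exp_latency_ge. Qed.

Lemma exp_latency_f3_nil : exp_latency i (f3 R) [::] = (V [set: 'I_n]%SET)%:E.
Proof.
have reach0 : reach R i [::] = @init_state R n by [].
have mass0 : mass R i [::] = 1.
  rewrite /mass reach0 /init_state (bigD1 [set: 'I_n]%SET) //= eqxx big1 ?addr0 //.
  by move=> S /negbTE ->.
rewrite exp_latency_f3 mass0 ?ltr01 // divr1 /= add0r /potential reach0 /init_state.
rewrite (bigD1 [set: 'I_n]%SET) //= eqxx mul1r big1 ?addr0 //.
by move=> S /negbTE ->; rewrite mul0r.
Qed.

End Verification.

Section LatencyValue.
Variables (R : realType) (n : nat).

Definition latency_value (S : {set 'I_n}) : R := (scaled_latency #|S|)%:R / 400%:R.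

Lemma latency_value_ge0 S : 0 <= latency_value S.
Proof. by rewrite divr_ge0 ?ler0n. Qed.

Lemma latency_value_le3 S : latency_value S <= 3.
Proof.
have le1200 : (scaled_latency #|S| <= 3 * 400)%N by case: #|S| => [|[|[|[|[|[|]]]]]].
by rewrite ler_pdivrMr ?ltr0n // -natrM ler_nat.
Qed.

Variable i : 'I_n.

Lemma next_value_latencyE S a :
  next_value i latency_value S a =
  (3%:R^-1) ^+ #|S :\ i| / 400%:R * (next_latency i S a)%:R.
Proof.
rewrite /next_value /next_latency natr_sum big_distrr [RHS]big_mkcond /=.
apply: eq_bigr => x _; rewrite prof_wE /latency_value.
case: (consistent _ _ _ _); case: (i \in _); rewrite /= ?mul0r ?mulr0 ?mul1r ?mulr1 //.
by rewrite mulrA mulrAC.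
Qed.

Hypothesis checked : bellman_check n.

Lemma latency_value_bellman (S : {set 'I_n}) (a : action) : i \in S ->
  latency_value S <= 1 + next_value i latency_value S a /\
  (a != ord0 -> latency_value S = 1 + next_value i latency_value S a).
Proof.
move=> iS; have [le eq] := bellman_check_sound a checked iS.
have cardS : #|S :\ i| = #|S|.-1 by rewrite (cardsD1 i S) iS.
set m := #|S|.-1 in le eq cardS.
have c_gt0 : 0 < (3%:R^-1) ^+ m / 400%:R :> R.
  by rewrite divr_gt0 ?ltr0n // exprn_gt0 // invr_gt0 ltr0n.
have lhsE : latency_value S = (3%:R^-1) ^+ m / 400%:R * (scaled_latency #|S| * 3 ^ m)%:R.
  by rewrite /latency_value natrM natrX exprVn; field; rewrite expf_neq0 ?pnatr_eq0.
have rhsE : 1 + next_value i latency_value S a =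
            (3%:R^-1) ^+ m / 400%:R * (400 * 3 ^ m + next_latency i S a)%:R.
  rewrite next_value_latencyE cardS natrD natrM natrX exprVn.
  by field; rewrite expf_neq0 ?pnatr_eq0.
rewrite lhsE rhsE ler_pM2l // ler_nat; split; first exact: le.
by move=> /eq ->.
Qed.

Lemma latency_value_bellman_le (S : {set 'I_n}) (a : action) :
  i \in S -> latency_value S <= 1 + next_value i latency_value S a.
Proof. by move=> iS; have [] := latency_value_bellman a iS. Qed.

Lemma latency_value_bellman_f3 (S : {set 'I_n}) (a : action) :
  i \in S -> a != ord0 -> latency_value S = 1 + next_value i latency_value S a.
Proof. by move=> iS; have [] := latency_value_bellman a iS. Qed.

End LatencyValue.

Lemma latency_value_setT (R : realType) n :
  (2 <= n <= 5)%N -> latency_value R [set: 'I_n]%SET = lat_value R n.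
Proof.
rewrite /latency_value cardsT card_ord.
by case: n => [|[|[|[|[|[|n]]]]]] // _; rewrite /lat_value /=; field.
Qed.

Theorem theorem4 (R : realType) (n : nat) :
  (2 <= n <= 5)%N ->
  f3_equilibrium R n /\
  (forall i : 'I_n, @exp_latency R n i (f3 R) [::] = (lat_value R n)%:E).
Proof.
move=> n25; have checked := bellman_check_small n25.
have V_ge0 := @latency_value_ge0 R n; have V_le3 := @latency_value_le3 R n.
have bellman_le i := @latency_value_bellman_le R n i checked.
have bellman_f3 i := @latency_value_bellman_f3 R n i checked.
split=> [i h sigma | i].
  exact: f3_best_response V_ge0 V_le3 (bellman_le i) (bellman_f3 i) sigma h.
rewrite (exp_latency_f3_nil V_ge0 V_le3 (bellman_le i) (bellman_f3 i)).
by rewrite latency_value_setT.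
Qed.
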